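(* Let $M$ be a $*$-left Ehresmann monoid with $M=\langle H\rangle_{(2)}$ for an atomic subset $H$. Let $h\in H$ and let $m=h_1h_2\cdots h_n$ be in $H$-canonical form. Then: (i) if $h_1\notin E$ and $h^*<h_1^+$, then $hh_1\cdots h_n$ is an $H$-canonical form of $hm$; (ii) if $h_1\in E$, or $h_1\notin E$ and $h^*\ge h_1^+$, then $hh_1\in H$ and $(hh_1)h_2\cdots h_n$ is an $H$-canonical form of $hm$; (iii) if $h_1\notin E$ and $h^*$, $h_1^+$ are incomparable, then $hh_1^+\in H$ and $(hh_1^+)h_1h_2\cdots h_n$ is an $H$-canonical form of $hm$.
   Context: A $*$-left Ehresmann monoid is a monoid $M$ with unary operations $+,*$ such that $x^+x=x$, $(x^+y^+)^+=x^+y^+$, $x^+y^+=y^+x^+$, $(xy)^+=(xy^+)^+$, $xx^*=x$, $(x^* )^*=x^*$, $x^*y^*=y^*x^*$, $(xy^* )^*y^*=(xy^* )^*$, $(x^* )^+=x^*$, $(x^+)^*=x^+$. Projections: $E=\{a^+\}=\{a^*\}$, ordered by $e\le f$ iff $ef=e$; $\sigma$ is the least monoid congruence containing $E\times E$; $\langle H\rangle_{(2)}$ is the subsemigroup generated by $H$. $H$ is atomic if: (H1) $E\subseteq H$; (H2) $h\in H,e\in E$ imply $he\in H$ and $(he)^*=h^*e$; (H3) if $h\in H$, $k\in H\setminus E$, $h^*\ge k^+$ then $hk\in H$ and $(hk)^*=k^*$; (H4) every $m\in M$ is $\sigma$-related to some $h\in H$; (H5) if $h,k,w\in H$, $hk\,\sigma\,w$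 and $k^*=w^*$, then some $u\in H$ has $u\,\sigma\,h$ and $u^*\ge k^+$. An expression $m=h_1\cdots h_n$ ($n\ge1$, $h_i\in H$) is in $H$-canonical form if $h_i^*<h_{i+1}^+$ for $1\le i<n$ and $h_i\notin E$ for $2\le i\le n$. *)

From Stdlib Require Import List.
Import ListNotations.
Set Implicit Arguments.

Record LEMonoid := {
  car :> Type;
  mul : car -> car -> car;
  one : car;
  plus : car -> car;
  star : car -> car;
  mulA : forall x y z, mul x (mul y z) = mul (mul x y) z;
  mul1l : forall x, mul one x = x;
  mul1r : forall x, mul x one = x;
  ax_plus1 : forall x, mul (plus x) x = x;
  ax_plus2 : forall x y, plus (mul (plus x) (plus y)) = mul (plus x) (plus y);
  ax_plus3 : forall x y, mul (plus x) (plus y) = mul (plus y) (plus x);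
  ax_plus4 : forall x y, plus (mul x y) = plus (mul x (plus y));
  ax_star1 : forall x, mul x (star x) = x;
  ax_star2 : forall x, star (star x) = star x;
  ax_star3 : forall x y, mul (star x) (star y) = mul (star y) (star x);
  ax_star4 : forall x y, mul (star (mul x (star y))) (star y) = star (mul x (star y));
  ax_mix1 : forall x, plus (star x) = star x;
  ax_mix2 : forall x, star (plus x) = plus x
}.

Section Defs.
Context {M : LEMonoid}.

(** Projections E = { a^+ : a in M } (= { a^* }). *)
Definition isProj (x : M) : Prop := exists a : M, x = plus M a.

Definition ple (e f : M) : Prop := mul M e f = e.
Definition plt (e f : M) : Prop := ple e f /\ e <> f.

Definition is_monoid_congruence (rho : M -> M -> Prop) : Prop :=
  (forall a, rho a a) /\ (forall a b, rho a b -> rho b a) /\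
  (forall a b c, rho a b -> rho b c -> rho a c) /\
  (forall a b c d, rho a b -> rho c d -> rho (mul M a c) (mul M b d)).

Definition sigma (a b : M) : Prop :=
  forall rho, is_monoid_congruence rho ->
    (forall e f, isProj e -> isProj f -> rho e f) -> rho a b.

Fixpoint lprod (l : list M) : M :=
  match l with
  | [] => one M
  | x :: t => mul M x (lprod t)
  end.

(** M = <H>_(2): every element is a product of a nonempty list of elements of H. *)
Definition generates (H : M -> Prop) : Prop :=
  forall m : M, exists l, l <> [] /\ Forall H l /\ lprod l = m.

Definition atomic (H : M -> Prop) : Prop :=
  (forall e, isProj e -> H e) /\
  (forall h e, H h -> isProj e ->
              H (mul M h e) /\ star M (mul M h e) = mul M (star M h) e) /\
  (forall h k, H h -> H k -> ~ isProj k -> ple (plus M k) (star M h) ->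
              H (mul M h k) /\ star M (mul M h k) = star M k) /\
  (forall m, exists h, H h /\ sigma m h) /\
  (forall h k w, H h -> H k -> H w -> sigma (mul M h k) w ->
              star M k = star M w ->
              exists u, H u /\ sigma u h /\ ple (plus M k) (star M u)).

Definition canonical_form (H : M -> Prop) (m : M) (l : list M) : Prop :=
  l <> [] /\ Forall H l /\ lprod l = m /\
  (forall i, S i < length l ->
     plt (star M (nth i l (one M))) (plus M (nth (S i) l (one M)))) /\
  (forall i, 1 <= i < length l -> ~ isProj (nth i l (one M))).

End Defs.

(* Multiplying a canonical form h_1 ... h_n on the left by h in H only affects
   its head.
   If h_1 is a projection, or h^* >= h_1^+, then h h_1 lies in H by (H2) resp.
   (H3), and (h h_1)^* is still strictly below h_2^+.  If h^* and h_1^+ are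
   incomparable, then hm = (h h_1^+) m, and h h_1^+ lies in H by (H2) with
   (h h_1^+)^* = h^* h_1^+ < h_1^+, so we are back in the first case. *)

From Stdlib Require Import List Lia.
Import ListNotations.

Set Implicit Arguments.

Section Projections.
Context {M : LEMonoid}.

Lemma isProj_plus (x : M) : isProj (plus M x).
Proof. exists x. reflexivity. Qed.

Lemma isProj_star (x : M) : isProj (star M x).
Proof. exists (star M x). symmetry. apply ax_mix1. Qed.

Lemma plus_proj (e : M) : isProj e -> plus M e = e.
Proof. intros [a ->]. rewrite <- (ax_mix2 M a) at 1. rewrite ax_mix1. apply ax_mix2. Qed.

Lemma star_proj (e : M) : isProj e -> star M e = e.
Proof. intros [a ->]. apply ax_mix2. Qed.

Lemma mul_proj_idem (e : M) : isProj e -> mul M e e = e.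
Proof. intros Pe. rewrite <- (plus_proj Pe) at 1. apply ax_plus1. Qed.

Lemma mul_projC (e f : M) : isProj e -> isProj f -> mul M e f = mul M f e.
Proof. intros Pe Pf. rewrite <- (plus_proj Pe), <- (plus_proj Pf). apply ax_plus3. Qed.

Lemma plt_mull (e f g : M) :
  isProj e -> isProj f -> plt f g -> plt (mul M e f) g.
Proof.
  intros Pe Pf [fg f_neq_g]. split; unfold ple in *.
  - rewrite <- mulA, fg. reflexivity.
  - intros efg. apply f_neq_g.
    rewrite <- fg, <- efg at 1.
    rewrite mulA, (mul_projC Pf Pe), <- mulA, (mul_proj_idem Pf). exact efg.
Qed.

Lemma plt_mul_incomparable (e f : M) :
  isProj e -> isProj f -> ~ ple f e -> plt (mul M e f) f.
Proof.
  intros Pe Pf f_not_le_e. split; unfold ple.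
  - rewrite <- mulA, (mul_proj_idem Pf). reflexivity.
  - intros ef. apply f_not_le_e. unfold ple. rewrite (mul_projC Pf Pe). exact ef.
Qed.

End Projections.

Section CanonicalForms.
Context {M : LEMonoid}.
Variable H : M -> Prop.

Definition below_head (e : M) (t : list M) : Prop :=
  match t with
  | [] => True
  | t0 :: _ => plt e (plus M t0)
  end.

Lemma canonical_form_below_head (m h1 : M) (t : list M) :
  canonical_form H m (h1 :: t) -> below_head (star M h1) t.
Proof.
  intros (_ & _ & _ & chain & _). destruct t as [|t0 t]; simpl; [exact I|].
  apply (chain 0). simpl. lia.
Qed.

Lemma canonical_form_cons (k h1 : M) (t : list M) (m : M) :
  canonical_form H m (h1 :: t) -> H k -> ~ isProj h1 ->
  plt (star M k) (plus M h1) -> canonical_form H (mul M k m) (k :: h1 :: t).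
Proof.
  intros (_ & Ht & prod_m & chain & nonproj) Hk h1_nonproj k_lt_h1.
  split; [discriminate|]. split; [constructor; assumption|].
  split; [simpl in *; rewrite <- prod_m; reflexivity|]. split.
  - intros [|i] Hi; [exact k_lt_h1|]. apply chain. simpl in *. lia.
  - intros [|[|i]] Hi; simpl in *; [lia | exact h1_nonproj |].
    apply (nonproj (S i)). lia.
Qed.

Lemma canonical_form_merge_head (x h1 : M) (t : list M) (m : M) :
  canonical_form H m (h1 :: t) -> H (mul M x h1) ->
  below_head (star M (mul M x h1)) t ->
  canonical_form H (mul M x m) (mul M x h1 :: t).
Proof.
  intros (_ & Ht & prod_m & chain & nonproj) Hxh1 below.
  apply Forall_cons_iff in Ht as [_ Ht].
  split; [discriminate|]. split; [constructor; assumption|].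
  split; [simpl in *; rewrite <- prod_m, mulA; reflexivity|]. split.
  - intros [|i] Hi.
    + destruct t as [|t0 t]; [simpl in Hi; lia | exact below].
    + apply (chain (S i)). exact Hi.
  - intros [|i] Hi; simpl in *; [lia|]. apply (nonproj (S i)). lia.
Qed.

Lemma mul_plus_head (h1 : M) (t : list M) (m : M) :
  canonical_form H m (h1 :: t) -> mul M (plus M h1) m = m.
Proof.
  intros (_ & _ & prod_m & _). simpl in prod_m.
  rewrite <- prod_m, mulA, ax_plus1. reflexivity.
Qed.

End CanonicalForms.

Theorem mainTheorem8 (M : LEMonoid) (H : M -> Prop)
  (Hat : atomic H) (Hgen : generates H)
  (h h1 : M) (t : list M) (m : M)
  (Hh : H h) (Hcf : canonical_form H m (h1 :: t)) :
  (* (i) *)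
  (~ isProj h1 -> plt (star M h) (plus M h1) ->
     canonical_form H (mul M h m) (h :: h1 :: t)) /\
  (* (ii) *)
  (isProj h1 \/ (~ isProj h1 /\ ple (plus M h1) (star M h)) ->
     H (mul M h h1) /\ canonical_form H (mul M h m) (mul M h h1 :: t)) /\
  (* (iii) *)
  (~ isProj h1 -> ~ ple (star M h) (plus M h1) -> ~ ple (plus M h1) (star M h) ->
     H (mul M h (plus M h1)) /\
     canonical_form H (mul M h m) (mul M h (plus M h1) :: h1 :: t)).
Proof.
  destruct Hat as (_ & H2 & H3 & _).
  assert (Hh1 : H h1) by (destruct Hcf as (_ & Ht & _); inversion Ht; assumption).
  pose proof (canonical_form_below_head Hcf) as below_h1.
  split; [|split].
  - intros h1_nonproj h_lt_h1. exact (canonical_form_cons h Hcf Hh h1_nonproj h_lt_h1).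
  - intros [h1_proj | [h1_nonproj h1_le_h]].
    + destruct (H2 h h1 Hh h1_proj) as [Hhh1 star_hh1].
      split; [exact Hhh1|]. apply (canonical_form_merge_head h Hcf Hhh1).
      rewrite star_hh1. rewrite (star_proj h1_proj) in below_h1.
      destruct t as [|t0 t]; [exact I|].
      exact (plt_mull (isProj_star h) h1_proj below_h1).
    + destruct (H3 h h1 Hh Hh1 h1_nonproj h1_le_h) as [Hhh1 star_hh1].
      split; [exact Hhh1|]. apply (canonical_form_merge_head h Hcf Hhh1).
      rewrite star_hh1. exact below_h1.
  - intros h1_nonproj _ h1_not_le_h.
    destruct (H2 h (plus M h1) Hh (isProj_plus h1)) as [Hk star_k].
    split; [exact Hk|].
    rewrite <- (mul_plus_head Hcf), mulA.
    apply (canonical_form_cons _ Hcf Hk h1_nonproj).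
    rewrite star_k. exact (plt_mul_incomparable (isProj_star h) (isProj_plus h1) h1_not_le_h).
Qed.
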